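(* Let $\sigma=(1\,2\,\cdots\,n)\in\mathrm{Sym}(n)$. For every $\epsilon>0$, for all sufficiently large $n$ there exist two finite generating sets $S_{\rm pos}$ and $S_{\rm neg}$ of $\mathrm{Sym}(n)$ (each symmetric, not containing $e$) such that: with respect to $S_{\rm pos}$, $|\sigma|=2$, $\mathrm{Av}(\sigma)<1+\epsilon$ and $\kappa(\sigma)>\frac{1-\epsilon}{2}$; and with respect to $S_{\rm neg}$, $|\sigma|=1$, $\mathrm{Av}(\sigma)>3-\epsilon$ and $\kappa(\sigma)<-2+\epsilon$.
   Context: For a group with finite generating set $S$ ($S=S^{-1}$, $e\notin S$), $|x|$ is word length, $\mathrm{Av}(g)=\frac{1}{|S|}\sum_{a\in S}|a^{-1}ga|$, and for $g\neq e$ the curvature is $\kappa(g)=\frac{|g|-\mathrm{Av}(g)}{|g|}$. *)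

From mathcomp Require Import all_boot all_order all_algebra all_fingroup.
From mathcomp Require Import reals.
Set Implicit Arguments. Unset Strict Implicit. Unset Printing Implicit Defensive.
Import GRing.Theory Num.Theory.
Local Open Scope group_scope.

(* The n-cycle sigma = (1 2 ... n) on {0,...,n-1}: i |-> i+1 mod n. *)
Definition ncycle (n : nat) : {perm 'I_n} := perm (@ordS_inj n).

Section WordLength.
Variable gT : finGroupType.
Implicit Types (S : {set gT}) (g : gT).

Definition sym_gen_set S : Prop :=
  [/\ <<S>> = [set: gT], (forall a, a \in S -> a^-1 \in S) & 1 \notin S].

Fixpoint words_of_length S (k : nat) : {set gT} :=
  if k is k'.+1 then (words_of_length S k' * S)%g else [set 1].

(* Word length: least k such that g is a product of k elements of S
   (searched in 0..#|gT|, which suffices whenever S generates). *)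
Definition wordlen S g : nat :=
  find (fun k => g \in words_of_length S k) (iota 0 #|gT|.+1).

Definition Av (R : numFieldType) S g : R :=
  ((\sum_(a in S) (wordlen S (g ^ a))%:R) / (#|S|)%:R)%R.

Definition kappa (R : numFieldType) S g : R :=
  (((wordlen S g)%:R - Av R S g) / (wordlen S g)%:R)%R.
End WordLength.

(* For S_pos take every permutation except 1, σ and σ^-1. Then σ = (σ t^-1) t for a
   suitable t, so |σ| = 2, and a conjugate σ^a has length 1 unless σ^a = σ^±1. Such a lie in two
   cosets of the centraliser of σ, which has order n, so at most 2n of the n! - 3
   generators give length 2 and Av(σ) tends to 1.
   For S_neg take σ^±1 together with all transpositions, so |σ| = 1. Conjugating σ by a
   transposition gives a fixed-point-free permutation with the parity of σ which agrees
   with σ at some point but differs from it; it is neither a generator nor a product of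
   two, hence has length at least 3. As all but two generators are transpositions,
   Av(σ) tends to 3. *)

From mathcomp Require Import all_boot all_order all_algebra all_fingroup.
From mathcomp Require Import reals.
From mathcomp Require Import zify lra.
Import Order.TTheory GRing.Theory Num.Theory.
Set Implicit Arguments. Unset Strict Implicit. Unset Printing Implicit Defensive.
Local Open Scope group_scope.

Lemma exists_notin (T : finType) (s : seq T) : size s < #|T| -> exists x, x \notin s.
Proof.
move=> lt_s_T; apply/existsP; rewrite -negb_forall; apply: contraTN lt_s_T.
move=> /forallP s_full; rewrite -leqNgt (leq_trans _ (card_size s)) //.
by apply/subset_leq_card/subsetP => x _; apply: s_full.
Qed.

Section WordLength.
Variable gT : finGroupType.
Implicit Types (S : {set gT}) (g : gT).

Lemma card_gt1 g : g != 1 -> 1 < #|gT|.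
Proof.
move=> g_neq1; apply: leq_trans (max_card [set 1; g]).
by rewrite cards2 eq_sym g_neq1.
Qed.

Lemma words_of_length1 S : words_of_length S 1 = S.
Proof. by rewrite /= -set1gE mul1g. Qed.

Lemma words_of_length2P S g :
  reflect (exists2 u, u \in S & exists2 v, v \in S & g = u * v)
          (g \in words_of_length S 2).
Proof.
rewrite /= -set1gE mul1g; apply: (iffP mulsgP).
  by case=> u v Su Sv ->; exists u => //; exists v.
by case=> u Su [v Sv ->]; exists u v.
Qed.

Lemma wordlen_le S g k :
  k <= #|gT| -> g \in words_of_length S k -> wordlen S g <= k.
Proof.
move=> le_k_T gSk; rewrite /wordlen leqNgt; apply/negP => /(before_find 0).
by rewrite nth_iota ?add0n ?gSk //; lia.
Qed.

Lemma wordlen_ge S g k : k <= #|gT|.+1 ->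
  (forall j, j < k -> g \notin words_of_length S j) -> k <= wordlen S g.
Proof.
move=> le_k_T short_g; rewrite /wordlen leqNgt; apply/negP => lt_find.
have has_g : has (fun k => g \in words_of_length S k) (iota 0 #|gT|.+1).
  by rewrite has_find size_iota; lia.
have := nth_find 0 has_g; rewrite nth_iota ?add0n.
  exact/negP/short_g.
by move: has_g; rewrite has_find size_iota.
Qed.

Lemma wordlen_eq1 S g : g \in S -> g != 1 -> wordlen S g = 1%N.
Proof.
move=> Sg g_neq1; have T_gt1 := card_gt1 g_neq1.
apply/eqP; rewrite eqn_leq wordlen_le ?words_of_length1 ?(ltnW T_gt1) //=.
by apply: wordlen_ge => [//|[|//] _]; rewrite /= in_set1.
Qed.

Lemma wordlen_eq2 S g : g != 1 -> g \notin S -> g \in words_of_length S 2 ->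
  wordlen S g = 2%N.
Proof.
move=> g_neq1 S'g gS2; have T_gt1 := card_gt1 g_neq1.
apply/eqP; rewrite eqn_leq wordlen_le //=.
apply: wordlen_ge => [|[|[|]]] //; first exact: ltnW.
- by rewrite /= in_set1.
- by rewrite words_of_length1.
Qed.

Lemma kappaE (R : numFieldType) S g : wordlen S g != 0%N ->
  kappa R S g = (1 - Av R S g / (wordlen S g)%:R)%R.
Proof. by move=> len_neq0; rewrite /kappa mulrBl mulfV ?pnatr_eq0. Qed.

End WordLength.

Lemma card_conjg_eq (gT : finGroupType) (g c : gT) :
  #|[set a | g ^ a == c]| <= #|'C[g]|.
Proof.
have [b /eqP gb | no_b] := pickP (fun a => g ^ a == c); last first.
  by rewrite (eq_card0 (A := [set a | g ^ a == c])) // => a; rewrite inE no_b.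
rewrite -(card_rcoset _ b); apply/subset_leq_card/subsetP => a.
rewrite inE -gb mem_rcoset cent1C => /eqP g_ab; apply/cent1P.
by rewrite /commute conjgC conjgM g_ab conjgK.
Qed.

Section AllButPowers.
Variables (gT : finGroupType) (g : gT).
Hypotheses (g_neq1 : g != 1) (card_gt4 : 4 < #|gT|).

Definition Spos : {set gT} := ~: [set 1; g; g^-1].

Lemma mem_Spos h : (h \in Spos) = [&& h != 1, h != g & h != g^-1].
Proof. by rewrite !inE; do 3 case: eqP. Qed.

Lemma Spos_invg h : h \in Spos -> h^-1 \in Spos.
Proof. by rewrite !mem_Spos !(inv_eq invgK) invg1 invgK => /and3P[-> -> ->]. Qed.

(* Both g t^-1 and t are generators as soon as t avoids 1, g, g^-1 and g^2. *)
Lemma Spos_split : exists2 t, t \in Spos & g * t^-1 \in Spos.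
Proof.
have [t] := @exists_notin gT [:: 1; g; g^-1; g ^+ 2] card_gt4.
rewrite !inE !negb_or => /and4P[t_neq1 t_neqg t_neqVg t_neqg2].
exists t; first by rewrite mem_Spos t_neq1 t_neqg.
rewrite mem_Spos divg_eq1 eq_sym t_neqg -{2}[g]mulg1 (inj_eq (mulgI g)) invg_eq1 t_neq1.
by rewrite -(inj_eq (mulgI g^-1)) mulKg -invMg (inj_eq invg_inj).
Qed.

Lemma Spos_words2 : g \in words_of_length Spos 2 /\ g^-1 \in words_of_length Spos 2.
Proof.
have [t St Sgt] := Spos_split; split; apply/words_of_length2P.
  by exists (g * t^-1) => //; exists t; rewrite ?mulgKV.
exists t^-1; first exact: Spos_invg.
by exists (g * t^-1)^-1; rewrite ?Spos_invg // -invMg mulgKV.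
Qed.

Lemma Spos_gen : sym_gen_set Spos.
Proof.
split; last by rewrite mem_Spos eqxx.
- apply/eqP; rewrite eqEsubset subsetT /=; apply/subsetP => h _.
  have [gS2 _] := Spos_words2.
  have g_gen : g \in <<Spos>>.
    by case/words_of_length2P: gS2 => u Su [v Sv ->]; rewrite groupM ?mem_gen.
  have [Sh|] := boolP (h \in Spos); first exact: mem_gen.
  by rewrite mem_Spos !negb_and !negbK => /or3P[] /eqP->; rewrite ?group1 ?groupV.
- exact: Spos_invg.
Qed.

Lemma wordlen_Spos : wordlen Spos g = 2%N.
Proof.
by rewrite wordlen_eq2 ?mem_Spos ?eqxx ?andbF //; case: Spos_words2.
Qed.

Lemma wordlen_Spos_le h : h != 1 ->
  wordlen Spos h <= 1 + (h == g) + (h == g^-1).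
Proof.
move=> h_neq1; have [gS2 gVS2] := Spos_words2; have T_gt1 := card_gt1 g_neq1.
have [->|h_neqg] /= := eqVneq h g.
  by rewrite (leq_trans (wordlen_le _ gS2)) ?leq_addr.
have [->|h_neqVg] /= := eqVneq h g^-1; first exact: wordlen_le.
by rewrite wordlen_eq1 // mem_Spos h_neq1 h_neqg.
Qed.

Lemma sum_conjg_eq (A : {set gT}) c :
  \sum_(a in A) ((g ^ a)%g == c) <= #|'C[g]|.
Proof.
rewrite (eq_bigr (fun a => if g ^ a == c then 1%N else 0%N)) => [|a _]; last by case: eqP.
rewrite -big_mkcondr sum1_card (leq_trans _ (card_conjg_eq g c)) //.
by apply/subset_leq_card/subsetP => a /andP[_ gac]; rewrite inE.
Qed.

Lemma sum_wordlen_conj_Spos :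
  (\sum_(a in Spos) wordlen Spos (g ^ a)%g <= #|Spos| + 2 * #|'C[g]|)%N.
Proof.
rewrite -sum1_card mul2n -addnn addnA.
have le_conj a : a \in Spos ->
    wordlen Spos (g ^ a) <= 1 + (g ^ a == g) + (g ^ a == g^-1).
  by move=> _; rewrite wordlen_Spos_le ?conjg_eq1.
by rewrite (leq_trans (leq_sum _ le_conj)) // !big_split /= !leq_add ?sum_conjg_eq.
Qed.

Lemma card_Spos : (#|gT| <= #|Spos| + 3)%N.
Proof.
rewrite -(cardsC [set 1; g; g^-1]) addnC leq_add2l.
apply: leq_trans (card_size [:: 1; g; g^-1]).
by apply/subset_leq_card/subsetP => h; rewrite !inE orbA.
Qed.

End AllButPowers.

Lemma leq_mul_pred_fact n : n * n.-1 <= n`!.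
Proof. by case: n => [|[|m]] //; rewrite !factS mulnA leq_pmulr ?fact_gt0. Qed.

Section Transpositions.
Variable T : finType.

Definition transpositions : {set {perm T}} :=
  [set t | [exists x : T * T, (x.1 != x.2) && (t == tperm x.1 x.2)]].

Lemma transpositionsP t :
  reflect (exists x y, x != y /\ t = tperm x y) (t \in transpositions).
Proof.
rewrite inE; apply: (iffP existsP).
  by case=> -[x y] /= /andP[xy /eqP ->]; exists x, y.
by case=> x [y [xy ->]]; exists (x, y); rewrite /= xy eqxx.
Qed.

Lemma transpositions_gen : <<transpositions>> = [set: {perm T}].
Proof.
apply/eqP; rewrite eqEsubset subsetT; apply/subsetP => p _.
have [ts -> dpair_ts] := prod_tpermP p.
rewrite big_seq; apply: group_prod => t ts_t; apply: mem_gen.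
by apply/transpositionsP; exists t.1, t.2; split=> //; apply: (allP dpair_ts).
Qed.

Lemma exists_fix_tpermM (x y x' y' : T) : 4 < #|T| ->
  exists z, (tperm x y * tperm x' y') z = z.
Proof.
move=> card_gt4; have [z] := @exists_notin _ [:: x; y; x'; y'] card_gt4.
rewrite !inE !negb_or => /and4P[zx zy zx' zy'].
by exists z; rewrite permM !tpermD // eq_sym.
Qed.

End Transpositions.

Section Cycle.
Variable n : nat.
Hypothesis n_ge5 : 4 < n.
Local Notation s := (ncycle n).

Let card_ord_gt4 : 4 < #|'I_n|. Proof. by rewrite card_ord. Qed.

Lemma ncycleX k x : val ((s ^+ k) x) = (x + k) %% n.
Proof.
have sE y : val (s y) = y.+1 %% n by rewrite permE.
rewrite permX; elim: k => [|k IHk]; first by rewrite addn0 modn_small.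
by rewrite iterS sE -addn1 IHk modnDml addn1 addnS.
Qed.

Lemma ncycle_iter_neq k x : 0 < k < n -> iter k s x != x.
Proof.
move=> /andP[k_gt0 k_ltn]; rewrite -permX -val_eqE ncycleX.
rewrite -[X in _ != X](modn_small (ltn_ord x)) -[X in _ != X %% _]addn0 eqn_modDl.
by rewrite mod0n modn_small //; lia.
Qed.

Lemma ncycle_fpf x : s x != x.
Proof. by apply: (@ncycle_iter_neq 1); lia. Qed.

Lemma ncycle_neq1 : s != 1.
Proof.
have x0 : 'I_n := Ordinal (ltnW n_ge5).
by apply: contraNneq (ncycle_fpf x0) => ->; rewrite perm1.
Qed.

Lemma conjg_ncycle_fpf a z : (s ^ a) z != z.
Proof. by rewrite -{1 2}(permKV a z) permJ (inj_eq perm_inj) ncycle_fpf. Qed.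

(* A permutation commuting with s is determined by its value at 0, as s is transitive. *)
Lemma card_cent_ncycle : #|'C[s]| <= n.
Proof.
have n_gt0 : 0 < n by lia.
pose x0 : 'I_n := Ordinal n_gt0.
rewrite -[n in _ <= n]card_ord; apply: (@leq_card_in _ _ (fun a : {perm 'I_n} => a x0)).
move=> a b /cent1P sa /cent1P sb /= ab; apply/permP => z.
have orbit_z : (s ^+ z) x0 = z by apply: val_inj; rewrite ncycleX add0n modn_small.
by rewrite -orbit_z -!permM -(commuteX _ sa) -(commuteX _ sb) !permM ab.
Qed.

Lemma card_perm_gt4 : 4 < #|{perm 'I_n}|.
Proof.
rewrite card_Sn (leq_trans _ (leq_mul_pred_fact n)) //.
by rewrite (leq_trans n_ge5) // leq_pmulr //; lia.
Qed.

Lemma conj_tperm_agrees (x y : 'I_n) : exists z, (s ^ tperm x y) z = s z.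
Proof.
have [z] := @exists_notin _ [:: x; y; s^-1 x; s^-1 y] card_ord_gt4.
rewrite !inE !negb_or => /and4P[zx zy zsx zsy]; exists z.
have tz : tperm x y z = z by rewrite tpermD // eq_sym.
have tsz : tperm x y (s z) = s z.
  by rewrite tpermD //; [apply: contraNneq zsx | apply: contraNneq zsy] => ->;
     rewrite permK.
by rewrite -{1}tz permJ tsz.
Qed.

Lemma conj_tperm_neq (x y : 'I_n) : x != y -> s ^ tperm x y != s.
Proof.
move=> xy; apply/eqP => st_eq_s; have := permJ s (tperm x y) x.
rewrite st_eq_s tpermL; have [sx_eqy|sx_neqy] := eqVneq (s x) y.
  rewrite sx_eqy tpermR => sy_eqx; have /(@ncycle_iter_neq 2 x) : 0 < 2 < n by lia.
  by rewrite /= sx_eqy sy_eqx eqxx.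
rewrite tpermD 1?eq_sym ?ncycle_fpf // => /perm_inj/eqP.
by rewrite eq_sym (negbTE xy).
Qed.

Definition Sneg : {set {perm 'I_n}} := [set s; s^-1] :|: transpositions 'I_n.

Lemma SnegP u : reflect [\/ u = s, u = s^-1 | exists x y, x != y /\ u = tperm x y]
                        (u \in Sneg).
Proof.
rewrite in_setU in_set2 -orbA; apply: (iffP or3P).
  case=> [/eqP-> | /eqP-> | /transpositionsP];
  by [constructor 1 | constructor 2 | constructor 3].
by case=> [-> | -> | /transpositionsP]; [constructor 1 | constructor 2 | constructor 3].
Qed.

Lemma Sneg_gen : sym_gen_set Sneg.
Proof.
split.
- apply/eqP; rewrite eqEsubset subsetT -transpositions_gen genS //; exact: subsetUr.
- move=> a /SnegP[-> | -> | [x [y [xy ->]]]]; apply/SnegP; rewrite ?invgK ?tpermV.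
  + by constructor 2.
  + by constructor 1.
  + by constructor 3; exists x, y.
- apply/SnegP => -[s_eq1 | sV_eq1 | [x [y [xy t_eq1]]]].
  + by move: ncycle_neq1; rewrite -s_eq1 eqxx.
  + by move: ncycle_neq1; rewrite -[s]invgK -sV_eq1 invg1 eqxx.
  + by move: xy; rewrite -[y](tpermL x y) -t_eq1 perm1 eqxx.
Qed.

Lemma wordlen_Sneg_ncycle : wordlen Sneg s = 1%N.
Proof. by rewrite wordlen_eq1 ?ncycle_neq1 //; apply/SnegP; constructor 1. Qed.

Lemma conj_tperm_notin_Sneg (x y : 'I_n) : x != y -> s ^ tperm x y \notin Sneg.
Proof.
move=> xy; apply/SnegP => -[st_eq | st_eq | [x' [y' [_ st_eq]]]].
- by move: (conj_tperm_neq xy); rewrite st_eq eqxx.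
- have [z] := conj_tperm_agrees x y; rewrite st_eq => sVz_eq_sz.
  have /(@ncycle_iter_neq 2 z) : 0 < 2 < n by lia.
  by rewrite /= -{1}sVz_eq_sz permKV eqxx.
- have [z] := exists_fix_tpermM x' y' x' x' card_ord_gt4.
  by rewrite tperm1 mulg1 -st_eq => /eqP; rewrite (negbTE (conjg_ncycle_fpf _ _)).
Qed.

(* Mixed products have the wrong parity; the others are powers of s, which differ from
   s ^ tperm x y at a point where the latter agrees with s, or have a fixed point. *)
Lemma conj_tperm_notin_Sneg2 (x y : 'I_n) :
  x != y -> s ^ tperm x y \notin words_of_length Sneg 2.
Proof.
move=> xy; have [z sz] := conj_tperm_agrees x y.
have fpf w : (s ^ tperm x y) w != w := conjg_ncycle_fpf _ w.
have odd_st : odd_perm (s ^ tperm x y) = odd_perm s := odd_permJ _ _.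
apply/words_of_length2P => -[u /SnegP Su [v /SnegP Sv st_uv]].
move: sz fpf odd_st; rewrite st_uv {st_uv}.
case: Su Sv => [->|->|[x1 [y1 [x1y1 ->]]]] [->|->|[x2 [y2 [x2y2 ->]]]] sz fpf;
  rewrite ?odd_permM ?odd_permV ?odd_tperm ?x1y1 ?x2y2;
  try by case: (odd_perm s).
- by move: sz; rewrite permM => /perm_inj/eqP; rewrite (negbTE (ncycle_fpf z)).
- by move: (fpf z); rewrite mulgV perm1 eqxx.
- by move: (fpf z); rewrite mulVg perm1 eqxx.
- have /(@ncycle_iter_neq 3 z) : 0 < 3 < n by lia.
  by rewrite /= -sz permM !permKV eqxx.
- have [w] := exists_fix_tpermM x1 y1 x2 y2 card_ord_gt4.
  by move/eqP; rewrite (negbTE (fpf w)).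
Qed.

Lemma wordlen_conj_tperm (x y : 'I_n) : x != y -> 3 <= wordlen Sneg (s ^ tperm x y).
Proof.
move=> xy; apply: wordlen_ge => [|[|[|[|//]]] _].
- by rewrite ltnS (card_gt1 ncycle_neq1).
- by rewrite /= in_set1 conjg_eq1 ncycle_neq1.
- by rewrite words_of_length1 conj_tperm_notin_Sneg.
- exact: conj_tperm_notin_Sneg2.
Qed.

Lemma card_transpositions : n.-1 <= #|transpositions 'I_n|.
Proof.
have x0 : 'I_n := Ordinal (ltnW n_ge5).
have -> : n.-1 = #|[set~ x0]| by rewrite cardsC1 card_ord.
rewrite -(@card_in_imset _ _ (tperm x0) [set~ x0]).
  apply/subset_leq_card/subsetP => _ /imsetP[j x0j ->].
  by apply/transpositionsP; exists x0, j; rewrite eq_sym -in_setC1.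
by move=> i j _ _ /= tij; rewrite -(tpermL x0 i) tij tpermL.
Qed.

Lemma card_Sneg : #|Sneg| <= #|transpositions 'I_n| + 2.
Proof.
rewrite addnC (leq_trans (leq_card_setU _ _)) // leq_add2r cards2.
by case: (_ != _).
Qed.

Lemma sum_wordlen_conj_Sneg :
  3 * #|transpositions 'I_n| <= \sum_(a in Sneg) wordlen Sneg (s ^ a).
Proof.
rewrite (big_setID (transpositions 'I_n)) (setIidPr (subsetUr _ _)) /=.
rewrite (leq_trans _ (leq_addr _ _)) // mulnC -sum_nat_const.
by apply: leq_sum => _ /transpositionsP[x [y [xy ->]]]; apply: wordlen_conj_tperm.
Qed.

End Cycle.

Local Open Scope ring_scope.

Lemma natr_lt_eps_mul (R : realFieldType) (eps : R) (M b c : nat) :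
  1 < eps * M%:R -> (0 < c)%N -> (c * M <= b)%N -> c%:R < eps * b%:R.
Proof.
move=> epsM c_gt0; rewrite -(ler_nat R) natrM => cMb.
have eps_gt0 : 0 < eps by have : 0 <= M%:R :> R by []; nra.
apply: (@lt_le_trans _ _ (c%:R * (eps * M%:R))).
  by rewrite -[X in X < _]mulr1 ltr_pM2l ?ltr0n.
by rewrite mulrCA ler_pM2l.
Qed.

Lemma ratio_lt1D (R : realFieldType) (eps : R) (a b c : nat) :
  (0 < b)%N -> (a <= b + c)%N -> c%:R < eps * b%:R -> a%:R / b%:R < 1 + eps.
Proof.
move=> b_gt0; rewrite -(ler_nat R) natrD ltr_pdivrMr ?ltr0n //; lra.
Qed.

Lemma ratio_gt3B (R : realFieldType) (eps : R) (a b c : nat) :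
  (0 < b)%N -> (3 * b <= a + c)%N -> c%:R < eps * b%:R -> 3 - eps < a%:R / b%:R.
Proof.
move=> b_gt0; rewrite -(ler_nat R) natrD natrM ltr_pdivlMr ?ltr0n //; lra.
Qed.

Section AverageBounds.
Variables (n : nat) (R : realFieldType) (eps : R) (M : nat).
Hypotheses (n_ge5 : (4 < n)%N) (epsM : 1 < eps * M%:R).

Lemma Av_Spos_ncycle : (2 * M + 5 <= n)%N -> Av R (Spos (ncycle n)) (ncycle n) < 1 + eps.
Proof.
move=> n_large; rewrite /Av -natr_sum.
(* Restated so that card_S and fact_n share the term #|{perm 'I_n}|, as nia needs. *)
have card_S : (#|{perm 'I_n}| <= #|Spos (ncycle n)| + 3)%N := card_Spos _.
have := leq_mul_pred_fact n; rewrite -card_Sn => fact_n.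
apply: (@ratio_lt1D _ _ _ _ (2 * n)); first by nia.
  apply: leq_trans (sum_wordlen_conj_Spos (ncycle_neq1 n_ge5) (card_perm_gt4 n_ge5)) _.
  by rewrite leq_add2l leq_mul2l card_cent_ncycle.
by apply: natr_lt_eps_mul epsM _ _; nia.
Qed.

Lemma Av_Sneg_ncycle : (6 * M + 1 <= n)%N -> 3 - eps < Av R (Sneg n) (ncycle n).
Proof.
move=> n_large; rewrite /Av -natr_sum.
have T_le_S : (#|transpositions 'I_n| <= #|Sneg n|)%N by apply/subset_leq_card/subsetUr.
have card_T := card_transpositions n_ge5.
have card_S := card_Sneg n.
have sum_ge := sum_wordlen_conj_Sneg n_ge5.
have S_gt0 : (0 < #|Sneg n|)%N by lia.
have sum_ge6 :
  (3 * #|Sneg n| <= \sum_(a in Sneg n) wordlen (Sneg n) (ncycle n ^ a)%g + 6)%N by lia.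
have eps_S : 6%:R < eps * #|Sneg n|%:R by apply: natr_lt_eps_mul epsM _ _; lia.
exact: ratio_gt3B S_gt0 sum_ge6 eps_S.
Qed.

End AverageBounds.

Theorem mainTheorem15 (R : realType) (eps : R) (heps : 0 < eps) :
  exists N : nat, forall n : nat, (N <= n)%N ->
    exists Spos Sneg : {set {perm 'I_n}},
      [/\ sym_gen_set Spos,
          wordlen Spos (ncycle n) = 2%N,
          Av R Spos (ncycle n) < 1 + eps &
          kappa R Spos (ncycle n) > (1 - eps) / 2]
      /\
      [/\ sym_gen_set Sneg,
          wordlen Sneg (ncycle n) = 1%N,
          Av R Sneg (ncycle n) > 3 - eps &
          kappa R Sneg (ncycle n) < -2 + eps].
Proof.
have [M epsM] : exists M : nat, 1 < eps * M%:R.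
  exists (Num.bound eps^-1); rewrite -ltr_pdivrMl // mulr1.
  by apply: archi_boundP; rewrite invr_ge0 ltW.
exists (6 * M + 5)%N => n n_large; have n_ge5 : (4 < n)%N by lia.
have s_neq1 := ncycle_neq1 n_ge5; have card_gt4 := card_perm_gt4 n_ge5.
have len_pos := wordlen_Spos s_neq1 card_gt4.
have len_neg := wordlen_Sneg_ncycle n_ge5.
exists (Spos (ncycle n)), (Sneg n).
have Av_pos : Av R (Spos (ncycle n)) (ncycle n) < 1 + eps.
  by apply: Av_Spos_ncycle epsM _; lia.
have Av_neg : 3 - eps < Av R (Sneg n) (ncycle n).
  by apply: Av_Sneg_ncycle epsM _; lia.
split; split=> //.
- exact: Spos_gen.
- by rewrite kappaE len_pos //; lra.
- exact: Sneg_gen.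
- by rewrite kappaE len_neg // divr1; lra.
Qed.
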